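(* For every preference profile $\sigma_N$ of $n$ metrics over $m$ alternatives and every $\epsilon>0$, there exists a nonempty subset $K\subseteq N$ with $|K|\le \left\lceil\frac{1}{\epsilon^2}\log(2m)\right\rceil$ that satisfies $\epsilon$-positional proportionality.
   Context: Let $N=[n]$ be a set of metrics and $A=[m]$ a set of alternatives. Each metric $i\in N$ has a ranking $\sigma_i$ of $A$; $\sigma_i(a)$ is the position of $a$ (1 is best). For $K\subseteq N$, $r\in[m]$, $a\in A$, let $C(K,r,a)=|\{i\in K:\sigma_i(a)\le r\}|$. For $\epsilon\ge0$, a nonempty subset $K\subseteq N$ satisfies $\epsilon$-positional proportionality if for all $a\in A$ and $r\in[m]$, $$\left|\frac{C(N,r,a)}{|N|}-\frac{C(K,r,a)}{|K|}\right|\le\epsilon.$$ Logarithms are natural. *)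

From mathcomp Require Import all_boot all_order all_algebra all_fingroup.
From mathcomp Require Import all_classical all_reals.
From mathcomp Require Import exp.
Set Implicit Arguments. Unset Strict Implicit. Unset Printing Implicit Defensive.
Import Order.TTheory GRing.Theory Num.Theory.
Local Open Scope ring_scope.

(* A preference profile assigns to
   each metric i a ranking sigma i : {perm 'I_m}; (sigma i a) is the 0-based
   position of alternative a, so the paper's 1-based position is
   (sigma i a).+1. Positions r range over [m] = {1,...,m} (1-based). *)

Definition count_top (n m : nat) (sigma : 'I_n -> {perm 'I_m})
  (K : {set 'I_n}) (r : nat) (a : 'I_m) : nat :=
  #|[set i in K | ((sigma i a).+1 <= r)%N]|.

Definition positional_proportional {R : realType} (n m : nat)
  (sigma : 'I_n -> {perm 'I_m}) (eps : R) (K : {set 'I_n}) : Prop :=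
  K != finset.set0 /\
  forall (a : 'I_m) (r : nat), (1 <= r <= m)%N ->
    `| (count_top sigma [set: 'I_n] r a)%:R / n%:R
       - (count_top sigma K r a)%:R / #|K|%:R | <= eps.

(* For a fixed 0/1 attribute f of the metrics, the k-subsets K on which the share of f
   exceeds its overall share p by more than eps form at most a fraction exp(-2 k eps^2)
   of all k-subsets (Hoeffding's bound for sampling without replacement).  By Chernoff's
   method this fraction is at most exp(-l k (p + eps)) times the mean over k-subsets of
   prod_(i in K) exp(l f i); Maclaurin's inequality bounds that elementary symmetric mean
   by the k-th power of the arithmetic mean 1 - p + p e^l, and Hoeffding's lemma bounds
   the latter by exp(l p + l^2/8).  Applying this to the attributes "metric i ranks a
   among its r best alternatives" and their complements gives 2 m^2 events; once
   k >= ln(2m)/eps^2 they cover at most half of the k-subsets, so some k-subset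
   avoids all of them and is eps-positionally proportional. *)

From mathcomp Require Import all_boot all_order all_algebra all_fingroup.
From mathcomp Require Import all_classical all_reals.
From mathcomp Require Import exp.
From mathcomp Require Import sequences topology normedtype derive realfun.
From mathcomp Require Import ring lra.
Set Implicit Arguments. Unset Strict Implicit. Unset Printing Implicit Defensive.
Import Order.TTheory GRing.Theory Num.Theory.
Import numFieldNormedType.Exports.
Local Open Scope ring_scope.

Lemma AMGM_pow_succ (R : realFieldType) (u t : R) (j : nat) : 0 <= u -> 0 <= t ->
  j.+1%:R * u * t ^+ j <= u ^+ j.+1 + j%:R * t ^+ j.+1.
Proof.
move=> u_ge0 t_ge0; elim: j => [|j IHj]; first by rewrite !expr0 !mulr1 mul0r addr0 mul1r.
have IHu := ler_wpM2l u_ge0 IHj.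
have sq_ge0 : 0 <= j.+1%:R * t ^+ j * (u - t) ^+ 2.
  by rewrite mulr_ge0 ?sqr_ge0 // mulr_ge0 ?exprn_ge0.
rewrite !exprS -!(natr1 j) in IHu sq_ge0 *.
nra.
Qed.

Lemma binomial_mean_step (R : realFieldType) (N j : nat) (t w : R) : 0 <= t -> 0 <= w ->
  'C(N, j.+1)%:R * t ^+ j.+1 + w * ('C(N, j)%:R * t ^+ j) <=
  'C(N.+1, j.+1)%:R * ((w + N%:R * t) / N.+1%:R) ^+ j.+1.
Proof.
move=> t_ge0 w_ge0; have [leNj | lejN] := ltnP N j.
  by rewrite !bin_small ?ltnS ?(ltnW leNj) // !(mul0r, mulr0, addr0).
set c : R := 'C(N.+1, j.+1)%:R.
have N1_neq0 : N.+1%:R != 0 :> R by rewrite pnatr_eq0.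
have binN_j1 : 'C(N, j.+1)%:R = c * (N%:R - j%:R) / N.+1%:R :> R.
  have := congr1 (fun n => n%:R : R) (mul_bin_down N.+1 j.+1).
  rewrite /= subSS !natrM natrB // => e.
  by apply: (mulfI N1_neq0); rewrite e mulrCA mulfV // mulr1 mulrC.
have binN_j : 'C(N, j)%:R = c * j.+1%:R / N.+1%:R :> R.
  have := congr1 (fun n => n%:R : R) (mul_bin_diag N.+1 j).
  rewrite /= !natrM => e.
  by apply: (mulfI N1_neq0); rewrite e mulrCA mulfV // mulr1 mulrC.
set u := (w + N%:R * t) / N.+1%:R.
have u_ge0 : 0 <= u by rewrite divr_ge0 // addr_ge0 // mulr_ge0.
have w_u : w = N.+1%:R * u - N%:R * t.
  by rewrite /u; field; rewrite addrC natr1.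
rewrite binN_j1 binN_j w_u.
have -> : c * (N%:R - j%:R) / N.+1%:R * t ^+ j.+1 +
    (N.+1%:R * u - N%:R * t) * (c * j.+1%:R / N.+1%:R * t ^+ j) =
    c * (j.+1%:R * u * t ^+ j - j%:R * t ^+ j.+1).
  by rewrite !exprS -!(natr1 N) -!(natr1 j); field; rewrite natr1.
by rewrite ler_wpM2l // lerBlDr AMGM_pow_succ.
Qed.

Section Maclaurin.
Variables (R : realFieldType) (T : finType) (y : T -> R).
Hypothesis y_ge0 : forall i, 0 <= y i.

Definition esym (A : {set T}) (k : nat) : R :=
  \sum_(K : {set T} | (K \subset A) && (#|K| == k)) \prod_(i in K) y i.

Lemma esym0 (A : {set T}) : esym A 0 = 1.
Proof.
rewrite /esym (eq_bigl (pred1 finset.set0)) ?big_pred1_eq ?big_set0 // => K.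
by rewrite /= cards_eq0 andbC; case: eqP => // ->; rewrite finset.sub0set.
Qed.

Lemma esym_small (A : {set T}) k : (#|A| < k)%N -> esym A k = 0.
Proof.
move=> ltAk; rewrite /esym big_pred0 // => K.
apply/negbTE/andP => -[/subset_leq_card leKA /eqP cardK].
by move: ltAk; rewrite -cardK ltnNge leKA.
Qed.

Lemma esymD1 (A : {set T}) x k : x \in A ->
  esym A k.+1 = esym (A :\ x) k.+1 + y x * esym (A :\ x) k.
Proof.
move=> Ax; rewrite /esym (bigID (fun K : {set T} => x \in K)) /= addrC; congr (_ + _).
  by apply: eq_bigl => K; rewrite subsetD1 andbAC.
rewrite big_distrr /= (reindex_onto (fun K : {set T} => x |: K) (fun K => K :\ x)) /=; last first.
  by move=> K /andP[_ xK]; exact: finset.setD1K.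
rewrite (eq_bigl (fun K : {set T} => (K \subset A :\ x) && (#|K| == k))) => [|K]; last first.
  rewrite setU11 andbT finset.subUset finset.sub1set Ax cardsU1 subsetD1.
  case: (boolP (x \in K)) => [xK | /negPf xK]; last by rewrite finset.setU1K ?xK ?eqxx ?andbT.
  have -> : ((x |: K) :\ x == K) = false.
    by apply/negbTE/eqP => eK; move: xK; rewrite -eK setD11.
  by rewrite /= !(andbF, andFb).
apply: eq_bigr => K; rewrite subsetD1 => /andP[/andP[_ /negPf xK] _].
by rewrite big_setU1 ?xK.
Qed.

Lemma esym_le_mean_pow (A : {set T}) k :
  esym A k <= 'C(#|A|, k)%:R * ((\sum_(i in A) y i) / #|A|%:R) ^+ k.
Proof.
have [N cardA] : exists N, #|A| = N by exists #|A|.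
rewrite cardA; elim: N A k cardA => [|N IHN] A k cardA.
  case: k => [|k]; first by rewrite esym0 bin0 expr0 mulr1.
  by rewrite esym_small ?cardA // bin0n mul0r.
case: k => [|j]; first by rewrite esym0 bin0 expr0 mulr1.
have [x Ax] : exists x, x \in A by apply/card_gt0P; rewrite cardA.
have cardAx : #|A :\ x| = N by move: cardA; rewrite (cardsD1 x) Ax add1n => -[].
rewrite (esymD1 _ Ax) (big_setD1 x Ax) /=.
set s := \sum_(i in A :\ x) y i.
have s_ge0 : 0 <= s by rewrite sumr_ge0.
have s_mean : N%:R * (s / N%:R) = s.
  case: N cardAx {IHN cardA} => [/eqP | N _]; last by rewrite mulrC divfK ?pnatr_eq0.
  by rewrite cards_eq0 /s => /eqP ->; rewrite big_set0 mul0r.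
have := binomial_mean_step N j (divr_ge0 s_ge0 (ler0n _ N)) (y_ge0 x).
rewrite s_mean; apply: le_trans.
by rewrite lerD ?ler_wpM2l ?IHN.
Qed.

End Maclaurin.

Section BernoulliMGF.
Variables (R : realType) (p : R).
Hypotheses (p_ge0 : 0 <= p) (p_le1 : p <= 1).

Let mgf (x : R) := 1 - p + p * expR x.

Let mgf_gt0 x : 0 < mgf x.
Proof.
have := expR_gt0 x; rewrite /mgf => ex.
have [p_lt1 | p_ge1] := ltP p 1.
  have : 0 <= p * expR x by rewrite mulr_ge0 // ltW.
  lra.
have -> : p = 1 by apply: le_anti; rewrite p_le1 p_ge1.
lra.
Qed.

Let is_derive_mgf (x : R) : is_derive x 1 mgf (p * expR x).
Proof.
rewrite /mgf; apply: is_derive_eq.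
by rewrite !(scaler0, add0r, mul1r, subr0, sub0r).
Qed.

(* [gap x] is the derivative of [x p + x^2/8 - ln (mgf x)]. *)
Let gap (x : R) := p + x / 4 - p * expR x / mgf x.

Let is_derive_gap (x : R) :
  is_derive x 1 gap (1 / 4 - p * expR x * (1 - p) / mgf x ^+ 2).
Proof.
have := is_deriveV (lt0r_neq0 (mgf_gt0 x)) (is_derive_mgf x).
rewrite /gap => mgfV; apply: is_derive_eq.
have := lt0r_neq0 (mgf_gt0 x); rewrite /mgf => mgf_neq0.
by rewrite !(scaler0, add0r, mul1r, subr0, sub0r) [_%:A]mulr1 /GRing.scale /=; field.
Qed.

Let gap_ge0 x : 0 <= x -> 0 <= gap x.
Proof.
move=> x_ge0; have <- : gap 0 = 0.
  by rewrite /gap /mgf expR0 mulr1 subrK invr1 mulr1 mul0r addr0 subrr.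
apply: (ger0_derive1_ndecry _ _ _ (lexx 0) x_ge0).
- by move=> y _; case: (is_derive_gap y).
- move=> y _; rewrite derive1E; have [_ ->] := is_derive_gap y.
  have := mgf_gt0 y; rewrite /mgf => mgf_y_gt0.
  have -> : 1 / 4 - p * expR y * (1 - p) / (1 - p + p * expR y) ^+ 2 =
            (1 - p - p * expR y) ^+ 2 / (4 * (1 - p + p * expR y) ^+ 2).
    by field; lra.
  by rewrite divr_ge0 ?sqr_ge0 // mulr_ge0 // sqr_ge0.
- by apply: derivable_within_continuous => y _; case: (is_derive_gap y).
Qed.

Let ratio (x : R) := mgf x * expR (- (x * p + x ^+ 2 / 8)).

Let is_derive_ratio (x : R) :
  is_derive x 1 ratio (- (expR (- (x * p + x ^+ 2 / 8)) * mgf x * gap x)).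
Proof.
rewrite /ratio; apply: is_derive_eq.
have := lt0r_neq0 (mgf_gt0 x); rewrite /gap /mgf => mgf_neq0.
by rewrite !(scaler0, add0r, mul1r, subr0, sub0r) [_%:A]mulr1 /GRing.scale /=; field.
Qed.

Lemma bernoulli_mgf_le l : 0 <= l -> 1 - p + p * expR l <= expR (l * p + l ^+ 2 / 8).
Proof.
move=> l_ge0; have : ratio l <= ratio 0.
  apply: (ler0_derive1_nincry _ _ _ (lexx 0) l_ge0).
  - by move=> y _; case: (is_derive_ratio y).
  - move=> y; rewrite in_itv /= andbT => y_ge0.
    rewrite derive1E; have [_ ->] := is_derive_ratio y; rewrite oppr_le0.
    by rewrite !mulr_ge0 ?gap_ge0 ?expR_ge0 ?ltW ?mgf_gt0.
  - by apply: derivable_within_continuous => y _; case: (is_derive_ratio y).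
rewrite /ratio /mgf expR0 mulr1 subrK !mul0r expr0n /= mul0r addr0 oppr0 expR0 mulr1.
by rewrite expRN ler_pdivrMr ?expR_gt0 // mul1r.
Qed.

End BernoulliMGF.

Definition share {R : numFieldType} {T : finType} (f : pred T) (K : {set T}) : R :=
  #|[set i in K | f i]|%:R / #|K|%:R.

Definition overrepresented {R : numFieldType} {T : finType} (f : pred T) (k : nat) (eps : R) :=
  [set K : {set T} | (#|K| == k) && (share f [set: T] + eps < share f K)].

Lemma card_set_in_predC (T : finType) (f : pred T) (K : {set T}) :
  #|[set i in K | ~~ f i]| = (#|K| - #|[set i in K | f i]|)%N.
Proof. by rewrite -!sum1dep_card -sum1_card [\sum_(i in K) 1](bigID f) /= addKn. Qed.

Lemma share_predC (R : numFieldType) (T : finType) (f : pred T) (K : {set T}) :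
  K != finset.set0 -> share (predC f) K = 1 - share f K :> R.
Proof.
rewrite -card_gt0 => K_gt0; rewrite /share card_set_in_predC natrB; last first.
  by apply: subset_leq_card; apply/fintype.subsetP => i; rewrite inE => /andP[].
by rewrite mulrBl divff ?pnatr_eq0 -?lt0n.
Qed.

Lemma card_le_sum_majorant (R : numDomainType) (I : finType) (Q P : pred I) (g : I -> R) :
  (forall i, Q i -> 0 <= g i) -> (forall i, Q i -> P i -> 1 <= g i) ->
  #|[set i | Q i && P i]|%:R <= \sum_(i | Q i) g i.
Proof.
move=> g_ge0 g_ge1; rewrite -sum1dep_card natr_sum (bigID P Q) /=.
rewrite -[X in X <= _]addr0 lerD ?sumr_ge0 // => [|i /andP[Qi _]]; last exact: g_ge0.
by apply: ler_sum => i /andP[]; exact: g_ge1.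
Qed.

Lemma card_bigcup_le (I T : finType) (B : I -> {set T}) :
  (#|\bigcup_i B i| <= \sum_i #|B i|)%N.
Proof.
elim/big_rec2: _ => [|i X n _ le_X_n]; first by rewrite cards0.
by rewrite (leq_trans (leq_card_setU _ _)) ?leq_add2l.
Qed.

Section SamplingWithoutReplacement.
Variables (R : realType) (T : finType) (f : pred T).

Let N := #|T|.
Let p : R := share f [set: T].

Let p_ge0 : 0 <= p. Proof. by rewrite divr_ge0. Qed.

Let p_le1 : p <= 1.
Proof.
rewrite /p /share; have [->|N_gt0] := posnP #|[set: T]|; first by rewrite invr0 mulr0.
rewrite ler_pdivrMr ?ltr0n // mul1r ler_nat.
by apply: subset_leq_card; apply/fintype.subsetP => i; rewrite inE => /andP[].
Qed.

Let card_set_in_sum (K : {set T}) :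
  #|[set i in K | f i]|%:R = \sum_(i in K) (f i)%:R :> R.
Proof. by rewrite -sum1dep_card natr_sum big_mkcondr; apply: eq_bigr => i _; case: (f i). Qed.

Let mean_mgf_le (l : R) :
  (\sum_(i in [set: T]) expR (l * (f i)%:R)) / N%:R <= 1 - p + p * expR l.
Proof.
have [N0 | N_gt0] := posnP N.
  rewrite N0 invr0 mulr0; have := mulr_ge0 p_ge0 (expR_ge0 l); have := p_le1.
  lra.
have hitsT : \sum_(i in [set: T]) (f i)%:R = p * N%:R :> R.
  by rewrite /p /share cardsT -/N divfK ?pnatr_eq0 -?lt0n // card_set_in_sum.
rewrite (eq_bigr (fun i => 1 + (f i)%:R * (expR l - 1))); last first.
  move=> i _; case: (f i) => /=; first by rewrite mulr1 mul1r addrC subrK.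
  by rewrite mulr0 mul0r addr0 expR0.
rewrite big_split /= -mulr_suml hitsT sumr_const cardsT -/N.
suff -> : (1 *+ N + p * N%:R * (expR l - 1)) / N%:R = 1 - p + p * expR l by [].
by field; rewrite pnatr_eq0 -lt0n.
Qed.

Lemma card_overrepresented_le (k : nat) (eps : R) : 0 < eps ->
  #|overrepresented f k eps|%:R <= 'C(N, k)%:R * expR (- (2 * k%:R * eps ^+ 2)).
Proof.
(* Chernoff's method, with the exponent l = 4 eps minimising l^2/8 - l eps. *)
move=> eps_gt0; set l := 4 * eps.
have l_ge0 : 0 <= l by rewrite mulr_ge0 // ltW.
set y := fun i => expR (l * (f i)%:R).
apply: le_trans (@card_le_sum_majorant R _ (fun K : {set T} => #|K| == k) _
  (fun K => expR (- (l * k%:R * (p + eps))) * \prod_(i in K) y i) _ _) _.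
- by move=> K _; rewrite mulr_ge0 ?expR_ge0 ?prodr_ge0 // => i _; rewrite expR_ge0.
- move=> K /eqP cardK; rewrite /y -expR_sum -expRD -[X in X <= _]expR0 ler_expR -mulr_sumr.
  rewrite -card_set_in_sum /share cardK => lt_pe.
  suff : k%:R * (p + eps) <= #|[set i in K | f i]|%:R by nra.
  have [->|k_gt0] := posnP k; first by rewrite mul0r.
  by rewrite mulrC -ler_pdivlMr ?ltr0n // ltW.
rewrite -mulr_sumr.
have := @esym_le_mean_pow R T y (fun i => expR_ge0 _) [set: T] k.
rewrite /esym (eq_bigl (fun K : {set T} => #|K| == k)) => [|K]; last by rewrite finset.subsetT.
rewrite cardsT -/N => esym_le.
apply: le_trans (ler_wpM2l (expR_ge0 _) esym_le) _.
rewrite mulrCA ler_wpM2l //.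
have mean_le : (\sum_(i in [set: T]) y i) / N%:R <= expR (l * p + l ^+ 2 / 8).
  exact: le_trans (mean_mgf_le l) (bernoulli_mgf_le p_ge0 p_le1 l_ge0).
apply: le_trans (ler_wpM2l (expR_ge0 _) (lerXn2r k _ _ mean_le)) _.
- by rewrite nnegrE divr_ge0 ?sumr_ge0 // => i _; rewrite expR_ge0.
- by rewrite nnegrE expR_ge0.
rewrite -expRM_natl -expRD ler_expR /l.
lra.
Qed.

End SamplingWithoutReplacement.

Definition deviating {R : numFieldType} {T : finType} (f : pred T) (k : nat) (eps : R) :=
  overrepresented f k eps :|: overrepresented (predC f) k eps.

Lemma mem_deviating (R : realFieldType) (T : finType) (f : pred T)
    (K : {set T}) (eps : R) :
  K != finset.set0 -> eps < `|share f [set: T] - share f K| -> K \in deviating f #|K| eps.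
Proof.
move=> K0; have T0 : [set: T] != finset.set0.
  by apply: contraNneq K0 => T0; rewrite -finset.subset0 -T0 finset.subsetT.
rewrite ltr_normr /deviating !inE eqxx /= !share_predC // => /orP[dev | dev].
  by apply/orP; right; lra.
by apply/orP; left; lra.
Qed.

Lemma card_deviating_le (R : realType) (T : finType) (f : pred T) (k : nat) (eps : R) :
  0 < eps -> #|deviating f k eps|%:R <= 2 * 'C(#|T|, k)%:R * expR (- (2 * k%:R * eps ^+ 2)).
Proof.
move=> eps_gt0; apply: (@le_trans _ _
  (#|overrepresented f k eps|%:R + #|overrepresented (predC f) k eps|%:R)).
  by rewrite -natrD ler_nat (leq_card_setU _ _).
by rewrite -mulrA mulr_natl mulr2n lerD ?card_overrepresented_le.
Qed.

Lemma exists_balanced_subset (R : realType) (T I : finType) (F : I -> pred T)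
    (k : nat) (eps : R) :
  (0 < k <= #|T|)%N -> 0 < eps -> 2 * #|I|%:R * expR (- (2 * k%:R * eps ^+ 2)) < 1 ->
  exists2 K : {set T}, #|K| = k &
    forall j, `|share (F j) [set: T] - share (F j) K| <= eps.
Proof.
move=> /andP[k_gt0 k_le] eps_gt0 union_lt1; apply: contrapT => none.
have deviates (K : {set T}) : #|K| == k -> K \in \bigcup_j deviating (F j) k eps.
  move=> /eqP cardK; have /existsNP[j] : ~ forall j, `|share (F j) [set: T] - share (F j) K| <= eps.
    by move=> balanced; apply: none; exists K.
  move/negP; rewrite -ltNge => dev; apply/bigcupP; exists j => //.
  by rewrite -cardK mem_deviating // -card_gt0 cardK.
have : ('C(#|T|, k) <= \sum_j #|deviating (F j) k eps|)%N.
  rewrite -card_draws; apply: leq_trans (card_bigcup_le _); apply: subset_leq_card.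
  by apply/fintype.subsetP => K; rewrite inE; exact: deviates.
rewrite -(ler_nat R) natr_sum => /le_trans C_le.
have /C_le : \sum_j #|deviating (F j) k eps|%:R <=
    #|I|%:R * (2 * 'C(#|T|, k)%:R * expR (- (2 * k%:R * eps ^+ 2))) :> R.
  apply: le_trans (ler_sum _ (fun j _ => card_deviating_le (F j) k eps_gt0)) _.
  by rewrite sumr_const -[_ *+ #|_|]mulr_natl.
have C_gt0 : 0 < 'C(#|T|, k)%:R :> R by rewrite ltr0n bin_gt0.
have := expR_gt0 (- (2 * k%:R * eps ^+ 2)); nra.
Qed.

Lemma union_bound_lt1 (R : realType) (m k : nat) (eps : R) :
  (0 < m)%N -> 0 < eps -> (eps ^+ 2)^-1 * ln (2 * m%:R) <= k%:R ->
  2 * (m * m)%:R * expR (- (2 * k%:R * eps ^+ 2)) < 1.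
Proof.
move=> m_gt0 eps_gt0 k_ge; have m_ge1 : 1 <= m%:R :> R by rewrite ler1n.
have ln_le : ln (2 * m%:R) <= k%:R * eps ^+ 2.
  by rewrite -ler_pdivrMr ?exprn_gt0 // mulrC.
have E_le : expR (- (2 * k%:R * eps ^+ 2)) * (2 * m%:R) ^+ 2 <= 1.
  rewrite -[2 * m%:R]lnK ?posrE; last lra.
  rewrite -expRM_natl -expRD -[X in _ <= X]expR0 ler_expR.
  nra.
rewrite (_ : 2 * (m * m)%:R * _ = expR (- (2 * k%:R * eps ^+ 2)) * (2 * m%:R) ^+ 2 / 2).
  lra.
by rewrite natrM; field.
Qed.

Theorem theorem3 (R : realType) (n m : nat) (hn : (0 < n)%N) (hm : (0 < m)%N)
  (sigma : 'I_n -> {perm 'I_m}) (eps : R) (heps : 0 < eps) :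
  exists K : {set 'I_n},
    ((#|K|%:Z : int) <= Num.ceil ((eps ^+ 2)^-1 * ln (2 * m%:R)))%R /\
    positional_proportional sigma eps K.
Proof.
set z := (eps ^+ 2)^-1 * ln (2 * m%:R).
have z_gt0 : 0 < z.
  have m_ge1 : 1 <= m%:R :> R by rewrite ler1n.
  by rewrite mulr_gt0 ?invr_gt0 ?exprn_gt0 // ln_gt0 //; lra.
have [k ceil_z] : exists k : nat, Num.ceil z = k%:Z.
  by exists `|Num.ceil z|%N; rewrite gez0_abs // ceil_ge0; lra.
have z_le_k : z <= k%:R by have := ceil_ge z; rewrite ceil_z.
have k_gt0 : (0 < k)%N by rewrite -ltz_nat -ceil_z ceil_gt0.
rewrite ceil_z.
have [le_nk | lt_kn] := leqP n k.
  exists [set: 'I_n]; rewrite cardsT card_ord lez_nat; split => //; split.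
    by apply/finset.set0Pn; exists (Ordinal hn); rewrite inE.
  by move=> a r _; rewrite cardsT card_ord subrr normr0 ltW.
have k_range : (0 < k <= #|'I_n|)%N by rewrite k_gt0 card_ord ltnW.
have union_lt1 : 2 * #|{: 'I_m * 'I_m}|%:R * expR (- (2 * k%:R * eps ^+ 2)) < 1.
  by rewrite card_prod !card_ord union_bound_lt1.
have [K cardK balanced] := exists_balanced_subset
  (fun ar : 'I_m * 'I_m => fun i => (sigma i ar.1 < ar.2.+1)%N) k_range heps union_lt1.
exists K; split; first by rewrite cardK lez_nat.
split; first by rewrite -card_gt0 cardK.
move=> a r /andP[r_gt0 r_le_m]; have r_lt : (r.-1 < m)%N by rewrite prednK.
by have := balanced (a, Ordinal r_lt); rewrite /share cardsT card_ord /= prednK.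
Qed.
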